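(* Let $$E=(\{0\}\times[0,1])\cup\bigcup_{n=1}^\infty\Big(\big(\{\tfrac1n\}\times[0,1]\big)\cup\big([\tfrac{1}{2n},\tfrac{1}{2n-1}]\times\{1\}\big)\cup\big([\tfrac{1}{2n+1},\tfrac{1}{2n}]\times\{0\}\big)\Big)\subseteq[0,1]^2.$$ Then $E$ is a connected closed subset of $[0,1]^2$ which is neither arcwise connected nor locally connected, and $E$ is a $B_1$-retract of $[0,1]^2$.
   Context: A function $f:X\to Y$ between topological spaces is a Baire-one function if it is the pointwise limit of a sequence of continuous functions $f_n:X\to Y$. A subset $E$ of $X$ (with the subspace topology) is a $B_1$-retract of $X$ if there exists a Baire-one function $r:X\to E$ with $r(x)=x$ for all $x\in E$. *)

From Stdlib Require Import Reals Lra Lia.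
Open Scope R_scope.

Definition pt := (R * R)%type.

Definition dist2 (p q : pt) : R :=
  sqrt ((fst p - fst q) ^ 2 + (snd p - snd q) ^ 2).

Definition square (p : pt) : Prop :=
  0 <= fst p <= 1 /\ 0 <= snd p <= 1.

Definition E (p : pt) : Prop :=
  let x := fst p in let y := snd p in
  (x = 0 /\ 0 <= y <= 1) \/
  exists n : nat, (1 <= n)%nat /\
    ( (x = 1 / INR n /\ 0 <= y <= 1)
   \/ (1 / INR (2 * n) <= x <= 1 / INR (2 * n - 1) /\ y = 1)
   \/ (1 / INR (2 * n + 1) <= x <= 1 / INR (2 * n) /\ y = 0) ).

Definition open2 (U : pt -> Prop) : Prop :=
  forall p, U p -> exists eps, eps > 0 /\ forall q, dist2 p q < eps -> U q.

Definition closed2 (A : pt -> Prop) : Prop :=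
  forall p, (forall eps, eps > 0 -> exists q, A q /\ dist2 p q < eps) -> A p.

Definition connected2 (A : pt -> Prop) : Prop :=
  ~ exists U V : pt -> Prop,
      open2 U /\ open2 V /\
      (forall p, A p -> U p \/ V p) /\
      (exists p, A p /\ U p) /\ (exists p, A p /\ V p) /\
      (forall p, A p -> U p -> V p -> False).

(* A path/arc in A: gamma restricted to [0,1]. An arc is a homeomorphism of
   [0,1] onto its image: continuous, injective, with continuous inverse. *)
Definition is_arc_in (A : pt -> Prop) (gamma : R -> pt) : Prop :=
  (forall t, 0 <= t <= 1 -> A (gamma t)) /\
  (forall t, 0 <= t <= 1 -> forall eps, eps > 0 -> exists delta, delta > 0 /\
     forall s, 0 <= s <= 1 -> Rabs (s - t) < delta -> dist2 (gamma s) (gamma t) < eps) /\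
  (forall s t, 0 <= s <= 1 -> 0 <= t <= 1 -> gamma s = gamma t -> s = t) /\
  (forall t, 0 <= t <= 1 -> forall eps, eps > 0 -> exists delta, delta > 0 /\
     forall s, 0 <= s <= 1 -> dist2 (gamma s) (gamma t) < delta -> Rabs (s - t) < eps).

Definition arcwise_connected2 (A : pt -> Prop) : Prop :=
  forall p q, A p -> A q -> p <> q ->
    exists gamma, is_arc_in A gamma /\ gamma 0 = p /\ gamma 1 = q.

Definition locally_connected2 (A : pt -> Prop) : Prop :=
  forall p U, A p -> open2 U -> U p ->
    exists V, open2 V /\ V p /\
      (forall q, A q -> V q -> U q) /\
      connected2 (fun q => A q /\ V q).

Definition continuous_on (X Y : pt -> Prop) (f : pt -> pt) : Prop :=
  (forall p, X p -> Y (f p)) /\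
  forall p, X p -> forall eps, eps > 0 -> exists delta, delta > 0 /\
    forall q, X q -> dist2 p q < delta -> dist2 (f p) (f q) < eps.

Definition baire_one (X Y : pt -> Prop) (r : pt -> pt) : Prop :=
  (forall p, X p -> Y (r p)) /\
  exists f : nat -> pt -> pt,
    (forall n, continuous_on X Y (f n)) /\
    (forall p, X p -> forall eps, eps > 0 -> exists N, forall n, (n >= N)%nat ->
       dist2 (f n p) (r p) < eps).

Definition B1_retract (X A : pt -> Prop) : Prop :=
  exists r, baire_one X A r /\ forall p, A p -> r p = p.

(* Under [(x, y) ↦ (1/x, y)] the part of E off the axis [x = 0] becomes a comb over
   [t >= 1]: unit vertical segments over the integers, joined alternately by top bars
   [[2n-1, 2n] × {1}] and bottom bars [[2n, 2n+1] × {0}].  Walking along this chain shows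
   that every clopen piece of E containing [(1, 0)] contains all segments, hence by
   accumulation the axis segment, so E is connected; off the axis E is locally a finite
   union of segments, so it is closed.  A path in E leaving the axis at time [m] must, by
   the intermediate value theorem, cross the interior of a top bar and of a bottom bar
   at times arbitrarily close to [m], contradicting continuity there; the same vertical
   lines cut every small neighbourhood of [(0, 1/2)], defeating local connectedness.
   Finally each strip [[k, k+1] × [0, 1]] retracts continuously onto its part of the comb,
   and these retractions glue to a continuous retraction of [(0, 1] × [0, 1]] onto
   [E ∖ axis]; precomposing with [x ↦ max x (1/(N+1))] gives continuous maps of the square
   into E that converge pointwise to a retraction fixing the axis. *)

From Stdlib Require Import Reals Lra Lia Classical ClassicalEpsilon.
Open Scope R_scope.

Lemma pow2_Rabs a : a ^ 2 = Rabs a ^ 2.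
Proof. unfold Rabs; destruct (Rcase_abs a); ring. Qed.

Lemma dist2_ge_fst p q : Rabs (fst p - fst q) <= dist2 p q.
Proof.
  unfold dist2. rewrite <- (sqrt_pow2 (Rabs _)) by apply Rabs_pos.
  apply sqrt_le_1_alt. rewrite <- pow2_Rabs.
  pose proof (pow2_ge_0 (snd p - snd q)). lra.
Qed.

Lemma dist2_ge_snd p q : Rabs (snd p - snd q) <= dist2 p q.
Proof.
  unfold dist2. rewrite <- (sqrt_pow2 (Rabs _)) by apply Rabs_pos.
  apply sqrt_le_1_alt. rewrite <- pow2_Rabs.
  pose proof (pow2_ge_0 (fst p - fst q)). lra.
Qed.

Lemma dist2_le_sum p q : dist2 p q <= Rabs (fst p - fst q) + Rabs (snd p - snd q).
Proof.
  pose proof (Rabs_pos (fst p - fst q)); pose proof (Rabs_pos (snd p - snd q)).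
  unfold dist2. rewrite <- (sqrt_pow2 (Rabs (fst p - fst q) + Rabs (snd p - snd q))) by lra.
  apply sqrt_le_1_alt. rewrite (pow2_Rabs (fst p - fst q)), (pow2_Rabs (snd p - snd q)).
  assert (0 <= Rabs (fst p - fst q) * Rabs (snd p - snd q)) by (apply Rmult_le_pos; lra).
  nra.
Qed.

Lemma dist2_sym p q : dist2 p q = dist2 q p.
Proof. unfold dist2. f_equal. ring. Qed.

Lemma dist2_refl p : dist2 p p = 0.
Proof.
  unfold dist2. replace ((fst p - fst p) ^ 2 + (snd p - snd p) ^ 2) with 0 by ring.
  apply sqrt_0.
Qed.

Lemma dist2_same_snd p q : snd p = snd q -> dist2 p q = Rabs (fst p - fst q).
Proof.
  intro H. unfold dist2. rewrite H, Rminus_diag, pow_i, Rplus_0_r by lia.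
  rewrite pow2_Rabs. apply sqrt_pow2, Rabs_pos.
Qed.

Lemma dist2_same_fst p q : fst p = fst q -> dist2 p q = Rabs (snd p - snd q).
Proof.
  intro H. unfold dist2. rewrite H, Rminus_diag, pow_i, Rplus_0_l by lia.
  rewrite pow2_Rabs. apply sqrt_pow2, Rabs_pos.
Qed.

Lemma open2_fst_lt c : open2 (fun q => fst q < c).
Proof.
  intros q Hq. exists (c - fst q). split; [lra|]. intros q' Hq'.
  pose proof (dist2_ge_fst q q'). unfold Rabs in *; destruct Rcase_abs; lra.
Qed.

Lemma open2_fst_gt c : open2 (fun q => c < fst q).
Proof.
  intros q Hq. exists (fst q - c). split; [lra|]. intros q' Hq'.
  pose proof (dist2_ge_fst q q'). unfold Rabs in *; destruct Rcase_abs; lra.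
Qed.

(** * Continuity in the plane *)

Definition rcont (f : pt -> R) : Prop :=
  forall p eps, eps > 0 -> exists d, d > 0 /\
    forall q, dist2 p q < d -> Rabs (f q - f p) < eps.

Definition nonexpansive2 (op : R -> R -> R) : Prop :=
  forall a b c d, Rabs (op a b - op c d) <= Rabs (a - c) + Rabs (b - d).

Lemma Rplus_nonexpansive2 : nonexpansive2 Rplus.
Proof.
  intros a b c d. replace (a + b - (c + d)) with ((a - c) + (b - d)) by ring.
  apply Rabs_triang.
Qed.

Lemma Rminus_nonexpansive2 : nonexpansive2 Rminus.
Proof.
  intros a b c d. replace (a - b - (c - d)) with ((a - c) + - (b - d)) by ring.
  rewrite <- (Rabs_Ropp (b - d)). apply Rabs_triang.
Qed.

Lemma Rmax_nonexpansive2 : nonexpansive2 Rmax.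
Proof.
  intros a b c d. unfold Rmax, Rabs.
  destruct (Rle_dec a b), (Rle_dec c d); repeat destruct Rcase_abs; lra.
Qed.

Lemma Rmin_nonexpansive2 : nonexpansive2 Rmin.
Proof.
  intros a b c d. unfold Rmin, Rabs.
  destruct (Rle_dec a b), (Rle_dec c d); repeat destruct Rcase_abs; lra.
Qed.

Lemma rcont_const c : rcont (fun _ => c).
Proof.
  intros p eps He. exists 1. split; [lra|]. intros.
  rewrite Rminus_diag, Rabs_R0. lra.
Qed.

Lemma rcont_fst : rcont fst.
Proof.
  intros p eps He. exists eps. split; [lra|]. intros q Hq.
  pose proof (dist2_ge_fst p q). rewrite Rabs_minus_sym. lra.
Qed.

Lemma rcont_snd : rcont snd.
Proof.
  intros p eps He. exists eps. split; [lra|]. intros q Hq.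
  pose proof (dist2_ge_snd p q). rewrite Rabs_minus_sym. lra.
Qed.

Lemma rcont_nonexpansive2 op f g :
  nonexpansive2 op -> rcont f -> rcont g -> rcont (fun p => op (f p) (g p)).
Proof.
  intros Hop Hf Hg p eps He.
  destruct (Hf p (eps / 2)) as [d1 [Hd1 H1]]; [lra|].
  destruct (Hg p (eps / 2)) as [d2 [Hd2 H2]]; [lra|].
  exists (Rmin d1 d2). split; [apply Rmin_pos; lra|].
  intros q Hq. pose proof (Rmin_l d1 d2); pose proof (Rmin_r d1 d2).
  specialize (H1 q ltac:(lra)). specialize (H2 q ltac:(lra)).
  pose proof (Hop (f q) (g q) (f p) (g p)). lra.
Qed.

Lemma rcont_abs f : rcont f -> rcont (fun p => Rabs (f p)).
Proof.
  intros Hf p eps He. destruct (Hf p eps He) as [d [Hd H]]. exists d. split; [exact Hd|].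
  intros q Hq. eapply Rle_lt_trans; [apply Rabs_triang_inv2|]. exact (H q Hq).
Qed.

Lemma rcont_mult f g : rcont f -> rcont g -> rcont (fun p => f p * g p).
Proof.
  intros Hf Hg p eps He.
  set (A := Rabs (f p) + 1). set (B := Rabs (g p) + 1).
  assert (HA : A > 0) by (unfold A; pose proof (Rabs_pos (f p)); lra).
  assert (HB : B > 0) by (unfold B; pose proof (Rabs_pos (g p)); lra).
  destruct (Hg p (Rmin 1 (eps / (2 * A)))) as [d2 [Hd2 H2]].
  { apply Rmin_pos; [lra|]. apply Rdiv_lt_0_compat; lra. }
  destruct (Hf p (eps / (2 * B))) as [d1 [Hd1 H1]]; [apply Rdiv_lt_0_compat; lra|].
  exists (Rmin d1 d2). split; [apply Rmin_pos; lra|].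
  intros q Hq. pose proof (Rmin_l d1 d2); pose proof (Rmin_r d1 d2).
  specialize (H1 q ltac:(lra)). specialize (H2 q ltac:(lra)).
  pose proof (Rmin_l 1 (eps / (2 * A))); pose proof (Rmin_r 1 (eps / (2 * A))).
  replace (f q * g q - f p * g p) with ((f q - f p) * g q + f p * (g q - g p)) by ring.
  eapply Rle_lt_trans; [apply Rabs_triang|]. rewrite !Rabs_mult.
  assert (Hg_bound : Rabs (g q) <= B).
  { unfold B. pose proof (Rabs_triang_inv (g q) (g p)). lra. }
  assert (T1 : Rabs (f q - f p) * Rabs (g q) <= eps / 2).
  { replace (eps / 2) with (eps / (2 * B) * B) by (field; lra).
    apply Rmult_le_compat; try apply Rabs_pos; lra. }
  assert (T2 : Rabs (f p) * Rabs (g q - g p) < eps / 2).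
  { apply Rle_lt_trans with ((A - 1) * (eps / (2 * A))).
    - apply Rmult_le_compat; try apply Rabs_pos; [unfold A; lra | lra].
    - replace (eps / 2) with (A * (eps / (2 * A))) by (field; lra).
      apply Rmult_lt_compat_r; [apply Rdiv_lt_0_compat|]; lra. }
  lra.
Qed.

Definition continuous_at2 (F : pt -> pt) (p : pt) : Prop :=
  forall eps, eps > 0 -> exists d, d > 0 /\
    forall q, dist2 p q < d -> dist2 (F p) (F q) < eps.

Lemma continuous_at2_pair f g p : rcont f -> rcont g -> continuous_at2 (fun q => (f q, g q)) p.
Proof.
  intros Hf Hg eps He.
  destruct (Hf p (eps / 2)) as [d1 [Hd1 H1]]; [lra|].
  destruct (Hg p (eps / 2)) as [d2 [Hd2 H2]]; [lra|].
  exists (Rmin d1 d2). split; [apply Rmin_pos; lra|].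
  intros q Hq. pose proof (Rmin_l d1 d2); pose proof (Rmin_r d1 d2).
  specialize (H1 q ltac:(lra)). specialize (H2 q ltac:(lra)).
  eapply Rle_lt_trans; [apply dist2_le_sum|]. simpl.
  rewrite (Rabs_minus_sym (f p)), (Rabs_minus_sym (g p)). lra.
Qed.

Lemma continuous_at2_comp F G p :
  continuous_at2 F p -> continuous_at2 G (F p) -> continuous_at2 (fun q => G (F q)) p.
Proof.
  intros HF HG eps He. destruct (HG eps He) as [d1 [Hd1 H1]].
  destruct (HF d1 Hd1) as [d2 [Hd2 H2]]. exists d2. split; auto.
Qed.

Lemma Rinv_continuous_at x : x <> 0 -> forall eps, eps > 0 -> exists d, d > 0 /\
  forall x', Rabs (x' - x) < d -> Rabs (/ x' - / x) < eps.
Proof.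
  intros Hx eps He.
  destruct (continuity_pt_inv id x (derivable_continuous_pt _ _ (derivable_pt_id x)) Hx eps He)
    as [d [Hd H]].
  exists d; split; [exact Hd|]. intros x' Hx'.
  destruct (Req_dec x' x) as [->|Hne]; [rewrite Rminus_diag, Rabs_R0; lra|].
  exact (H x' (conj (conj I (not_eq_sym Hne)) Hx')).
Qed.

Definition invx (p : pt) : pt := (1 / fst p, snd p).

Lemma continuous_at2_invx p : fst p <> 0 -> continuous_at2 invx p.
Proof.
  intros Hp eps He. destruct (Rinv_continuous_at (fst p) Hp (eps / 2)) as [d [Hd H]]; [lra|].
  exists (Rmin d (eps / 2)). split; [apply Rmin_pos; lra|].
  intros q Hq. pose proof (Rmin_l d (eps / 2)); pose proof (Rmin_r d (eps / 2)).
  pose proof (dist2_ge_fst p q) as Hfst; pose proof (dist2_ge_snd p q).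
  eapply Rle_lt_trans; [apply dist2_le_sum|]. unfold invx; simpl.
  rewrite Rabs_minus_sym in Hfst. specialize (H (fst q) ltac:(lra)).
  unfold Rdiv. rewrite !Rmult_1_l, Rabs_minus_sym. lra.
Qed.

(** * Paths on a compact interval *)

Lemma real_induction (a b : R) (P : R -> Prop) : a <= b -> P a ->
  (forall m, a < m <= b -> (forall s, a <= s < m -> P s) -> P m) ->
  (forall m, a <= m < b -> P m -> exists d, d > 0 /\ forall s, m < s < m + d -> s <= b -> P s) ->
  forall s, a <= s <= b -> P s.
Proof.
  intros Hab Pa Hleft Hright.
  set (A := fun t => a <= t <= b /\ forall r, a <= r <= t -> P r).
  assert (Aa : A a) by (split; [lra | intros r Hr; replace r with a by lra; exact Pa]).
  destruct (completeness A) as [m [Hub Hlub]].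
  { exists b. intros t [Ht _]. lra. }
  { exists a. exact Aa. }
  assert (Ham : a <= m) by (apply Hub; exact Aa).
  assert (Hmb : m <= b) by (apply Hlub; intros t [Ht _]; lra).
  assert (Hbelow : forall s, a <= s < m -> P s).
  { intros s Hs. apply NNPP. intro HnP.
    assert (is_upper_bound A s).
    { intros t [Ht HPt]. destruct (Rle_lt_dec t s); auto. exfalso. apply HnP, HPt. lra. }
    specialize (Hlub s H). lra. }
  assert (Pm : P m).
  { destruct (Req_dec m a) as [->|Hne]; [exact Pa|]. apply Hleft; [lra | exact Hbelow]. }
  assert (Am : A m).
  { split; [lra|]. intros r Hr. destruct (Req_dec r m) as [->|]; [exact Pm|]. apply Hbelow; lra. }
  destruct (Req_dec m b) as [<-|Hmb'].
  - intros s Hs. apply (proj2 Am). lra.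
  - exfalso. destruct (Hright m ltac:(lra) Pm) as [d [Hd Hs]].
    pose proof (Rmin_l (m + d / 2) b); pose proof (Rmin_r (m + d / 2) b).
    assert (m < Rmin (m + d / 2) b) by (apply Rmin_glb_lt; lra).
    set (s := Rmin (m + d / 2) b) in *.
    assert (As : A s).
    { split; [lra|]. intros r Hr. destruct (Rle_lt_dec r m).
      - apply (proj2 Am). lra.
      - apply Hs; lra. }
    specialize (Hub s As). lra.
Qed.

Definition path_cont (g : R -> pt) (a b : R) : Prop :=
  forall t, a <= t <= b -> forall eps, eps > 0 -> exists d, d > 0 /\
    forall s, a <= s <= b -> Rabs (s - t) < d -> dist2 (g s) (g t) < eps.

Section PathSeparation.
Variables (U V : pt -> Prop) (g : R -> pt) (a b : R).
Hypotheses (HU : open2 U) (HV : open2 V) (Hab : a <= b) (Hg : path_cont g a b).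
Hypothesis Hcover : forall s, a <= s <= b -> U (g s) \/ V (g s).
Hypothesis Hdisj : forall s, a <= s <= b -> U (g s) -> V (g s) -> False.

Lemma path_stays_in_part : U (g a) -> forall s, a <= s <= b -> U (g s).
Proof.
  intro Ua. apply real_induction; auto.
  - intros m Hm Hbelow. destruct (Hcover m ltac:(lra)) as [|Vm]; auto. exfalso.
    destruct (HV _ Vm) as [e [He HVe]]. destruct (Hg m ltac:(lra) e He) as [d [Hd Hd2]].
    pose proof (Rmax_l a (m - d / 2)); pose proof (Rmax_r a (m - d / 2)).
    assert (Rmax a (m - d / 2) < m) by (apply Rmax_lub_lt; lra).
    set (s := Rmax a (m - d / 2)) in *.
    apply (Hdisj s ltac:(lra)); [apply Hbelow; lra|].
    apply HVe. rewrite dist2_sym. apply Hd2; [lra|]. rewrite Rabs_left; lra.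
  - intros m Hm Um. destruct (HU _ Um) as [e [He HUe]].
    destruct (Hg m ltac:(lra) e He) as [d [Hd Hd2]].
    exists d. split; [exact Hd|]. intros s Hs Hsb. apply HUe. rewrite dist2_sym.
    apply Hd2; [lra|]. rewrite Rabs_right; lra.
Qed.

End PathSeparation.

Lemma path_connected_interval U V g a b :
  open2 U -> open2 V -> a <= b -> path_cont g a b ->
  (forall s, a <= s <= b -> U (g s) \/ V (g s)) ->
  (forall s, a <= s <= b -> U (g s) -> V (g s) -> False) ->
  forall s0, a <= s0 <= b -> U (g s0) -> forall s, a <= s <= b -> U (g s).
Proof.
  intros HU HV Hab Hg Hcover Hdisj s0 Hs0 U0.
  destruct (Hcover a ltac:(lra)) as [Ua|Va].
  - exact (path_stays_in_part U V g a b HU HV Hab Hg Hcover Hdisj Ua).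
  - exfalso. apply (Hdisj s0 Hs0 U0).
    refine (path_stays_in_part V U g a b HV HU Hab Hg _ _ Va s0 Hs0).
    + intros s Hs. destruct (Hcover s Hs); auto.
    + intros s Hs H1 H2. exact (Hdisj s Hs H2 H1).
Qed.

Lemma path_fst_ivt g a b c : a <= b -> path_cont g a b ->
  fst (g a) < c -> c < fst (g b) -> exists t, a <= t <= b /\ fst (g t) = c.
Proof.
  intros Hab Hg Ha Hb. apply NNPP. intro Hnone.
  assert (Hlt : forall s, a <= s <= b -> fst (g s) < c).
  { apply (path_connected_interval _ (fun q => c < fst q) g a b (open2_fst_lt c) (open2_fst_gt c)
      Hab Hg) with a; [| intros s Hs H1 H2; lra | lra | exact Ha].
    intros s Hs. destruct (Rtotal_order (fst (g s)) c) as [|[Heq|]]; auto.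
    exfalso. apply Hnone. exists s. auto. }
  specialize (Hlt b ltac:(lra)). lra.
Qed.

(** * The comb picture of E *)

Lemma INR_ge_1 n : (1 <= n)%nat -> 1 <= INR n.
Proof. intro H. apply (le_INR 1 n) in H. exact H. Qed.

Lemma INR_double n : INR (2 * n) = 2 * INR n.
Proof. rewrite mult_INR. simpl. ring. Qed.

Lemma INR_double_add1 n : INR (2 * n + 1) = 2 * INR n + 1.
Proof. rewrite plus_INR, mult_INR. simpl. ring. Qed.

Lemma INR_double_sub1 n : (1 <= n)%nat -> INR (2 * n - 1) = 2 * INR n - 1.
Proof. intro. rewrite minus_INR by lia. rewrite mult_INR. simpl. ring. Qed.

Lemma INR_not_strictly_between a b : INR a < INR b < INR a + 1 -> False.
Proof.
  intros [H1 H2]. apply INR_lt, le_INR in H1. rewrite S_INR in H1. lra.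
Qed.

Lemma div1_pos x : 0 < x -> 0 < 1 / x.
Proof. intro. apply Rdiv_lt_0_compat; lra. Qed.

Lemma div1_div1 x : x <> 0 -> 1 / (1 / x) = x.
Proof. intro. field. exact H. Qed.

Lemma le_div1_swap x a : 0 < x -> 0 < a -> (x <= 1 / a <-> a <= 1 / x).
Proof.
  intros Hx Ha. unfold Rdiv. rewrite !Rmult_1_l. split; intro H.
  - rewrite <- (Rinv_inv a). apply Rinv_le_contravar; assumption.
  - rewrite <- (Rinv_inv x). apply Rinv_le_contravar; assumption.
Qed.

Lemma div1_le_swap x a : 0 < x -> 0 < a -> (1 / a <= x <-> 1 / x <= a).
Proof.
  intros Hx Ha. unfold Rdiv. rewrite !Rmult_1_l. split; intro H.
  - rewrite <- (Rinv_inv a). apply Rinv_le_contravar; [apply Rinv_0_lt_compat|]; assumption.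
  - rewrite <- (Rinv_inv x). apply Rinv_le_contravar; [apply Rinv_0_lt_compat|]; assumption.
Qed.

Lemma lt_div1_swap x a : 0 < x -> 0 < a -> (x < 1 / a <-> a < 1 / x).
Proof.
  intros Hx Ha. pose proof (div1_le_swap x a Hx Ha).
  split; intro H1; apply Rnot_le_lt; intro H2; apply H in H2; lra.
Qed.

Lemma div1_lt_swap x a : 0 < x -> 0 < a -> (1 / a < x <-> 1 / x < a).
Proof.
  intros Hx Ha. pose proof (le_div1_swap x a Hx Ha).
  split; intro H1; apply Rnot_le_lt; intro H2; apply H in H2; lra.
Qed.

Lemma div1_INR_le a b : (1 <= a <= b)%nat -> 1 / INR b <= 1 / INR a.
Proof.
  intro H. pose proof (INR_ge_1 a ltac:(lia)). pose proof (le_INR a b ltac:(lia)).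
  unfold Rdiv; rewrite !Rmult_1_l. apply Rinv_le_contravar; lra.
Qed.

(* The image of [E ∩ {x > 0}] under [(x, y) ↦ (1/x, y)]. *)
Definition comb (t y : R) : Prop :=
  0 <= y <= 1 /\
  ((exists n, (1 <= n)%nat /\ t = INR n) \/
   (exists n, (1 <= n)%nat /\ 2 * INR n - 1 <= t <= 2 * INR n /\ y = 1) \/
   (exists n, (1 <= n)%nat /\ 2 * INR n <= t <= 2 * INR n + 1 /\ y = 0)).

Lemma E_pos_comb x y : 0 < x -> (E (x, y) <-> comb (1 / x) y).
Proof.
  intro Hx. unfold E; cbn [fst snd]. split.
  - intros [[H0 _]|[n [Hn H]]]; [lra|]. pose proof (INR_ge_1 n Hn).
    destruct H as [[Hv Hy]|[[[Hb1 Hb2] Hy]|[[Hb1 Hb2] Hy]]].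
    + split; [exact Hy|]. left. exists n. split; [exact Hn|]. rewrite Hv. apply div1_div1. lra.
    + rewrite INR_double, INR_double_sub1 in * by exact Hn. split; [lra|].
      right; left. exists n. repeat split; auto.
      * apply le_div1_swap; auto; lra.
      * apply div1_le_swap; auto; lra.
    + rewrite INR_double, INR_double_add1 in *. split; [lra|].
      right; right. exists n. repeat split; auto.
      * apply le_div1_swap; auto; lra.
      * apply div1_le_swap; auto; lra.
  - intros [Hy H]. right.
    destruct H as [[n [Hn Hv]]|[[n [Hn [[Hb1 Hb2] Hy1]]]|[n [Hn [[Hb1 Hb2] Hy0]]]]];
      exists n; split; auto; pose proof (INR_ge_1 n Hn).
    + left. split; [|exact Hy]. rewrite <- Hv, div1_div1; lra.
    + right; left. rewrite INR_double, INR_double_sub1 by exact Hn. repeat split; auto.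
      * apply div1_le_swap; auto; lra.
      * apply le_div1_swap; auto; lra.
    + right; right. rewrite INR_double, INR_double_add1. repeat split; auto.
      * apply div1_le_swap; auto; lra.
      * apply le_div1_swap; auto; lra.
Qed.

Lemma comb_ge_1 t y : comb t y -> 1 <= t.
Proof.
  intros [_ [[n [Hn Hv]]|[[n [Hn [Hb _]]]|[n [Hn [Hb _]]]]]]; pose proof (INR_ge_1 n Hn); lra.
Qed.

Lemma comb_top_bar t y j : (1 <= j)%nat -> 2 * INR j - 1 < t < 2 * INR j -> comb t y -> y = 1.
Proof.
  intros Hj Ht [_ [[n [Hn Hv]]|[[n [Hn [Hb Hy1]]]|[n [Hn [Hb Hy0]]]]]]; auto; exfalso.
  - apply (INR_not_strictly_between (2 * j - 1) n). rewrite INR_double_sub1 by exact Hj. lra.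
  - apply (INR_not_strictly_between n j). lra.
Qed.

Lemma comb_bottom_bar t y j : (1 <= j)%nat -> 2 * INR j < t < 2 * INR j + 1 -> comb t y -> y = 0.
Proof.
  intros Hj Ht [_ [[n [Hn Hv]]|[[n [Hn [Hb Hy1]]]|[n [Hn [Hb Hy0]]]]]]; auto; exfalso.
  - apply (INR_not_strictly_between (2 * j) n). rewrite INR_double. lra.
  - apply (INR_not_strictly_between j n). lra.
Qed.

Lemma E_axis y : 0 <= y <= 1 -> E (0, y).
Proof. intro Hy. left. auto. Qed.

Lemma E_vertical n y : (1 <= n)%nat -> 0 <= y <= 1 -> E (1 / INR n, y).
Proof. intros. right. exists n. split; [assumption|]. left. auto. Qed.

Lemma E_one_zero : E (1, 0).
Proof. replace 1 with (1 / INR 1) at 1 by (simpl; field). apply E_vertical; [lia|lra]. Qed.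

Lemma E_top_bar n x : (1 <= n)%nat -> 1 / INR (2 * n) <= x <= 1 / INR (2 * n - 1) -> E (x, 1).
Proof. intros. right. exists n. split; [assumption|]. right; left. cbn [fst snd]. auto. Qed.

Lemma E_bottom_bar n x : (1 <= n)%nat -> 1 / INR (2 * n + 1) <= x <= 1 / INR (2 * n) -> E (x, 0).
Proof. intros. right. exists n. split; [assumption|]. right; right. cbn [fst snd]. auto. Qed.

Lemma E_axis_or_pos p : E p -> (fst p = 0 /\ 0 <= snd p <= 1) \/ 0 < fst p.
Proof.
  intros [Haxis|[n [Hn H]]]; [left; exact Haxis|right]. pose proof (INR_ge_1 n Hn).
  destruct H as [[Hv _]|[[Hb _]|[Hb _]]].
  - rewrite Hv. apply div1_pos. lra.
  - rewrite INR_double in Hb. pose proof (div1_pos (2 * INR n)). lra.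
  - rewrite INR_double_add1 in Hb. pose proof (div1_pos (2 * INR n + 1)). lra.
Qed.

Lemma E_square p : E p -> square p.
Proof.
  intro HE. destruct (E_axis_or_pos p HE) as [[Hx Hy]|Hx]; [split; lra|].
  destruct p as [x y]; cbn [fst snd] in *.
  apply E_pos_comb in HE; [|exact Hx]. pose proof (comb_ge_1 _ _ HE) as Ht.
  apply (le_div1_swap 1 x) in Ht; [|lra|exact Hx]. rewrite Rdiv_1_r in Ht.
  destruct HE as [Hy _]. split; cbn; lra.
Qed.

Definition rect a b c d (p : pt) : Prop := a <= fst p <= b /\ c <= snd p <= d.

Lemma closed2_separated (A : pt -> Prop) p : closed2 A -> ~ A p ->
  exists e, e > 0 /\ forall q, A q -> dist2 p q >= e.
Proof.
  intros HA Hn. apply NNPP. intro H. apply Hn, HA. intros eps He. apply NNPP. intro H2.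
  apply H. exists eps. split; [exact He|]. intros q Hq.
  apply Rnot_lt_ge. intro Hlt. apply H2. eauto.
Qed.

Lemma closed2_union A B : closed2 A -> closed2 B -> closed2 (fun p => A p \/ B p).
Proof.
  intros HA HB p Hp. apply NNPP. intro Hn.
  destruct (closed2_separated A p HA (fun h => Hn (or_introl h))) as [e1 [He1 H1]].
  destruct (closed2_separated B p HB (fun h => Hn (or_intror h))) as [e2 [He2 H2]].
  pose proof (Rmin_l e1 e2); pose proof (Rmin_r e1 e2).
  destruct (Hp (Rmin e1 e2) (Rmin_pos _ _ He1 He2)) as [q [[Aq|Bq] Hq]].
  - specialize (H1 q Aq). lra.
  - specialize (H2 q Bq). lra.
Qed.

Lemma closed2_rect a b c d : closed2 (rect a b c d).
Proof.
  intros p Hp.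
  assert (Hcoord : forall f : pt -> R, (forall p q, Rabs (f p - f q) <= dist2 p q) ->
            forall lo hi, (forall q, rect a b c d q -> lo <= f q <= hi) -> lo <= f p <= hi).
  { intros f Hf lo hi Hq. split; apply Rnot_lt_le; intro Hout.
    - destruct (Hp (lo - f p)) as [q [Aq Dq]]; [lra|].
      specialize (Hq q Aq). specialize (Hf p q). unfold Rabs in Hf; destruct Rcase_abs; lra.
    - destruct (Hp (f p - hi)) as [q [Aq Dq]]; [lra|].
      specialize (Hq q Aq). specialize (Hf p q). unfold Rabs in Hf; destruct Rcase_abs; lra. }
  split.
  - apply (Hcoord fst dist2_ge_fst). intros q [Hq _]. exact Hq.
  - apply (Hcoord snd dist2_ge_snd). intros q [_ Hq]. exact Hq.
Qed.

Definition E_piece (n : nat) (p : pt) : Prop :=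
  rect (1 / INR n) (1 / INR n) 0 1 p \/
  rect (1 / INR (2 * n)) (1 / INR (2 * n - 1)) 1 1 p \/
  rect (1 / INR (2 * n + 1)) (1 / INR (2 * n)) 0 0 p.

Fixpoint E_upto (N : nat) : pt -> Prop :=
  match N with
  | O => rect 0 0 0 1
  | S M => fun p => E_upto M p \/ E_piece (S M) p
  end.

Lemma closed2_E_upto N : closed2 (E_upto N).
Proof.
  induction N as [|N IH]; simpl; [apply closed2_rect|].
  repeat apply closed2_union; auto; apply closed2_rect.
Qed.

Lemma E_upto_sub N p : E_upto N p -> E p.
Proof.
  revert p. induction N as [|N IH]; intros p H; simpl in H.
  - destruct H as [H1 H2]. left. split; lra.
  - destruct H as [H|[H|[H|H]]]; auto; destruct H as [H1 H2];
      right; exists (S N); split; try lia.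
    + left. split; lra.
    + right; left. split; lra.
    + right; right. split; lra.
Qed.

Lemma E_upto_piece N n p : (1 <= n <= N)%nat -> E_piece n p -> E_upto N p.
Proof.
  intros Hn H. destruct n as [|n]; [lia|].
  assert (Hmono : forall M, (S n <= M)%nat -> E_upto M p).
  { intros M HM. induction HM; simpl; auto. }
  apply Hmono. lia.
Qed.

Lemma INR_lt_of_div1_lt a b : (1 <= a)%nat -> (1 <= b)%nat -> 1 / INR a < 1 / INR b -> (b < a)%nat.
Proof.
  intros Ha Hb H. pose proof (INR_ge_1 a Ha); pose proof (INR_ge_1 b Hb).
  apply (div1_lt_swap (1 / INR b) (INR a)) in H; [|apply div1_pos; lra|lra].
  rewrite div1_div1 in H by lra. apply INR_lt. exact H.
Qed.

Lemma E_upto_away_from_axis N q : (1 <= N)%nat -> E q -> 1 / INR N < fst q -> E_upto N q.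
Proof.
  intros HN Eq Hq. destruct Eq as [[Hz _]|[n [Hn HH]]].
  { pose proof (div1_pos (INR N) ltac:(pose proof (INR_ge_1 N HN); lra)). lra. }
  apply (E_upto_piece N n); [split; [exact Hn|]|]; cbn [fst snd] in HH;
    destruct HH as [[Hv Hy]|[[Hb Hy]|[Hb Hy]]].
  - apply Nat.lt_le_incl, INR_lt_of_div1_lt; auto. lra.
  - assert (2 * n - 1 < N)%nat by (apply INR_lt_of_div1_lt; auto; lia || lra). lia.
  - assert (2 * n < N)%nat by (apply INR_lt_of_div1_lt; auto; lia || lra). lia.
  - left. split; lra.
  - right; left. split; lra.
  - right; right. split; lra.
Qed.

Lemma E_closed : closed2 E.
Proof.
  intros p Hp.
  assert (Hsq : rect 0 1 0 1 p).
  { apply closed2_rect. intros eps He. destruct (Hp eps He) as [q [Eq Dq]].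
    exists q. split; [apply E_square|]; assumption. }
  destruct Hsq as [Hx Hy]. destruct (Req_dec (fst p) 0) as [Hx0|Hx0].
  { left. split; assumption. }
  destruct (INR_unbounded (2 / fst p)) as [N HN].
  assert (HN1 : (1 <= N)%nat).
  { destruct N; [|lia]. simpl in HN. assert (0 < 2 / fst p) by (apply Rdiv_lt_0_compat; lra). lra. }
  pose proof (INR_ge_1 N HN1).
  assert (Hsmall : 1 / INR N < fst p / 2).
  { apply div1_lt_swap; [lra|lra|]. replace (1 / (fst p / 2)) with (2 / fst p) by (field; lra).
    exact HN. }
  apply (E_upto_sub N), closed2_E_upto. intros eps He.
  pose proof (Rmin_l eps (fst p / 2)); pose proof (Rmin_r eps (fst p / 2)).
  destruct (Hp (Rmin eps (fst p / 2))) as [q [Eq Dq]]; [apply Rmin_pos; lra|].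
  exists q. split; [|lra]. apply E_upto_away_from_axis; auto.
  pose proof (dist2_ge_fst p q). unfold Rabs in *; destruct Rcase_abs; lra.
Qed.

Section Connected.
Variables U V : pt -> Prop.
Hypotheses (HU : open2 U) (HV : open2 V).
Hypothesis Hcover : forall p, E p -> U p \/ V p.
Hypothesis Hdisj : forall p, E p -> U p -> V p -> False.

Lemma vertical_segment_in_part x y0 : (forall y, 0 <= y <= 1 -> E (x, y)) ->
  0 <= y0 <= 1 -> U (x, y0) -> forall y, 0 <= y <= 1 -> U (x, y).
Proof.
  intros HE Hy0 U0.
  apply (path_connected_interval U V (fun s => (x, s)) 0 1 HU HV ltac:(lra)) with y0; auto.
  - intros t Ht eps He. exists eps. split; [exact He|]. intros s Hs Hd.
    rewrite dist2_same_fst by reflexivity. exact Hd.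
  - intros s Hs. exact (Hdisj _ (HE s Hs)).
Qed.

Lemma horizontal_segment_in_part a b y x0 : a <= b -> (forall x, a <= x <= b -> E (x, y)) ->
  a <= x0 <= b -> U (x0, y) -> forall x, a <= x <= b -> U (x, y).
Proof.
  intros Hab HE Hx0 U0.
  apply (path_connected_interval U V (fun s => (s, y)) a b HU HV Hab) with x0; auto.
  - intros t Ht eps He. exists eps. split; [exact He|]. intros s Hs Hd.
    rewrite dist2_same_snd by reflexivity. exact Hd.
  - intros s Hs. exact (Hdisj _ (HE s Hs)).
Qed.

Hypothesis U10 : U (1, 0).

(* Walk along the comb: the segment over [1/(m+1)] is reached from the one over [1/m]
   through the bottom bar when [m] is even and through the top bar when [m] is odd. *)
Lemma vertical_segments_in_part n : (1 <= n)%nat -> forall y, 0 <= y <= 1 -> U (1 / INR n, y).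
Proof.
  induction n as [|m IH]; intros Hn; [lia|].
  destruct (Nat.eq_dec m 0) as [->|Hm].
  { apply (vertical_segment_in_part _ 0); [intros; apply E_vertical; auto|lra|].
    replace (1 / INR 1) with 1 by (simpl; field). exact U10. }
  specialize (IH ltac:(lia)).
  destruct (Nat.Even_or_Odd m) as [[k Hk]|[k Hk]].
  - assert (Hbar : forall x, 1 / INR (2 * k + 1) <= x <= 1 / INR (2 * k) -> U (x, 0)).
    { apply (horizontal_segment_in_part _ _ _ (1 / INR (2 * k))).
      - apply div1_INR_le; lia.
      - intros; eapply E_bottom_bar; [|eassumption]. lia.
      - split; [apply div1_INR_le; lia|lra].
      - rewrite <- Hk. apply IH. lra. }
    apply (vertical_segment_in_part _ 0); [intros; apply E_vertical; auto|lra|].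
    replace (S m) with (2 * k + 1)%nat by lia. apply Hbar.
    split; [lra|apply div1_INR_le; lia].
  - assert (Hbar : forall x, 1 / INR (2 * (k + 1)) <= x <= 1 / INR (2 * (k + 1) - 1) -> U (x, 1)).
    { apply (horizontal_segment_in_part _ _ _ (1 / INR (2 * (k + 1) - 1))).
      - apply div1_INR_le; lia.
      - intros; eapply E_top_bar; [|eassumption]. lia.
      - split; [apply div1_INR_le; lia|lra].
      - replace (2 * (k + 1) - 1)%nat with m by lia. apply IH. lra. }
    apply (vertical_segment_in_part _ 1); [intros; apply E_vertical; auto|lra|].
    replace (S m) with (2 * (k + 1))%nat by lia. apply Hbar.
    split; [lra|apply div1_INR_le; lia].
Qed.

Lemma origin_in_part : U (0, 0).
Proof.
  destruct (Hcover (0, 0)) as [|V0]; [apply E_axis; lra|assumption|]. exfalso.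
  destruct (HV _ V0) as [e [He HVe]].
  destruct (INR_unbounded (1 / e)) as [n Hn].
  assert (Hn1 : (1 <= n)%nat).
  { destruct n; [|lia]. simpl in Hn. pose proof (div1_pos e He). lra. }
  pose proof (INR_ge_1 n Hn1). pose proof (div1_pos (INR n)).
  assert (Hlt : 1 / INR n < e) by (apply div1_lt_swap; lra).
  apply (Hdisj (1 / INR n, 0)).
  - apply E_vertical; [exact Hn1|lra].
  - apply vertical_segments_in_part; [exact Hn1|lra].
  - apply HVe. rewrite dist2_same_snd by reflexivity. simpl.
    rewrite Rabs_left; lra.
Qed.

Lemma E_in_part p : E p -> U p.
Proof.
  destruct p as [x y].
  intros [[Hx Hy]|[n [Hn H]]]; cbn [fst snd] in *.
  - subst x. apply (vertical_segment_in_part 0 0); [intros; apply E_axis; auto|lra|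
      exact origin_in_part|exact Hy].
  - destruct H as [[Hv Hy]|[[Hb Hy]|[Hb Hy]]].
    + subst x. apply vertical_segments_in_part; assumption.
    + subst y. set (b := 1 / INR (2 * n - 1)) in *.
      apply (horizontal_segment_in_part (1 / INR (2 * n)) b 1 b); [lra| |lra| |exact Hb].
      * intros; eapply E_top_bar; eassumption.
      * apply vertical_segments_in_part; [lia|lra].
    + subst y. set (b := 1 / INR (2 * n)) in *.
      apply (horizontal_segment_in_part (1 / INR (2 * n + 1)) b 0 b); [lra| |lra| |exact Hb].
      * intros; eapply E_bottom_bar; eassumption.
      * apply vertical_segments_in_part; [lia|lra].
Qed.

End Connected.

Lemma E_connected : connected2 E.
Proof.
  intros [U [V [HU [HV [Hcover [[p [Ep Up]] [[q [Eq Vq]] Hdisj]]]]]]].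
  destruct (Hcover _ E_one_zero) as [U1|V1].
  - exact (Hdisj q Eq (E_in_part U V HU HV Hcover Hdisj U1 q Eq) Vq).
  - refine (Hdisj p Ep Up (E_in_part V U HV HU _ _ V1 p Ep)).
    + intros r Er. destruct (Hcover r Er); auto.
    + intros r Er H1 H2. exact (Hdisj r Er H2 H1).
Qed.

Lemma exists_odd_INR_gt r : exists j, (1 <= j)%nat /\ r < 2 * INR j - 1.
Proof.
  destruct (INR_unbounded r) as [n Hn]. exists (S n). split; [lia|].
  rewrite S_INR. pose proof (pos_INR n). lra.
Qed.

Lemma E_snd_on_top_bar p j : (1 <= j)%nat -> E p -> fst p = 1 / (2 * INR j - 1 / 2) -> snd p = 1.
Proof.
  intros Hj HE Hx. pose proof (INR_ge_1 j Hj). destruct p as [x y]; cbn [fst snd] in *.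
  assert (Hx0 : 0 < x) by (rewrite Hx; apply div1_pos; lra).
  apply (comb_top_bar (1 / x) y j Hj); [|apply E_pos_comb; assumption].
  rewrite Hx, div1_div1; lra.
Qed.

Lemma E_snd_on_bottom_bar p j : (1 <= j)%nat -> E p -> fst p = 1 / (2 * INR j + 1 / 2) -> snd p = 0.
Proof.
  intros Hj HE Hx. pose proof (INR_ge_1 j Hj). destruct p as [x y]; cbn [fst snd] in *.
  assert (Hx0 : 0 < x) by (rewrite Hx; apply div1_pos; lra).
  apply (comb_bottom_bar (1 / x) y j Hj); [|apply E_pos_comb; assumption].
  rewrite Hx, div1_div1; lra.
Qed.

Lemma path_cont_sub g a b a' b' : a <= a' -> b' <= b -> path_cont g a b -> path_cont g a' b'.
Proof.
  intros Ha Hb Hg t Ht eps He. destruct (Hg t ltac:(lra) eps He) as [d [Hd H]].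
  exists d. split; [exact Hd|]. intros s Hs. apply H. lra.
Qed.

Section PathsInE.
Variables (g : R -> pt) (a b : R).
Hypotheses (Hab : a <= b) (Hg : path_cont g a b) (HE : forall t, a <= t <= b -> E (g t)).

(* By the intermediate value theorem the path crosses [x = 1/(2j - 1/2)] and
   [x = 1/(2j + 1/2)], which meet E only on a top bar and a bottom bar. *)
Lemma E_path_off_axis_visits_both_bars : fst (g a) = 0 -> 0 < fst (g b) ->
  exists t1 t2, a <= t1 <= b /\ a <= t2 <= b /\ snd (g t1) = 1 /\ snd (g t2) = 0.
Proof.
  intros Ha Hb. destruct (exists_odd_INR_gt (1 / fst (g b))) as [j [Hj Hjb]].
  pose proof (INR_ge_1 j Hj).
  assert (Hc1 : 1 / (2 * INR j - 1 / 2) < fst (g b)) by (apply div1_lt_swap; lra).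
  assert (Hc2 : 1 / (2 * INR j + 1 / 2) < fst (g b)) by (apply div1_lt_swap; lra).
  destruct (path_fst_ivt g a b (1 / (2 * INR j - 1 / 2)) Hab Hg) as [t1 [Ht1 Hx1]];
    [rewrite Ha; apply div1_pos; lra|exact Hc1|].
  destruct (path_fst_ivt g a b (1 / (2 * INR j + 1 / 2)) Hab Hg) as [t2 [Ht2 Hx2]];
    [rewrite Ha; apply div1_pos; lra|exact Hc2|].
  exists t1, t2. repeat split; try lra.
  - exact (E_snd_on_top_bar _ j Hj (HE t1 Ht1) Hx1).
  - exact (E_snd_on_bottom_bar _ j Hj (HE t2 Ht2) Hx2).
Qed.

End PathsInE.

Lemma E_path_stays_on_axis g a b : a <= b -> path_cont g a b ->
  (forall t, a <= t <= b -> E (g t)) -> fst (g a) = 0 -> forall s, a <= s <= b -> fst (g s) = 0.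
Proof.
  intros Hab Hg HE Ha.
  assert (Hnonneg : forall t, a <= t <= b -> 0 <= fst (g t)).
  { intros t Ht. destruct (E_square _ (HE t Ht)). lra. }
  apply real_induction; [exact Hab|exact Ha| |].
  - intros m Hm Hbelow. apply NNPP. intro Hne.
    assert (Hpos : 0 < fst (g m)) by (pose proof (Hnonneg m ltac:(lra)); lra).
    destruct (Hg m ltac:(lra) (fst (g m)) Hpos) as [d [Hd Hclose]].
    pose proof (Rmax_l a (m - d / 2)); pose proof (Rmax_r a (m - d / 2)).
    assert (Rmax a (m - d / 2) < m) by (apply Rmax_lub_lt; lra).
    set (s := Rmax a (m - d / 2)) in *.
    specialize (Hclose s ltac:(lra) ltac:(rewrite Rabs_left; lra)).
    pose proof (dist2_ge_fst (g s) (g m)) as Hfst.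
    rewrite (Hbelow s ltac:(lra)), Rminus_0_l, Rabs_Ropp, Rabs_right in Hfst; lra.
  - intros m Hm Hgm. destruct (Hg m ltac:(lra) (1 / 2) ltac:(lra)) as [d [Hd Hclose]].
    exists d. split; [exact Hd|]. intros s Hs Hsb. apply NNPP. intro Hne.
    assert (Hpos : 0 < fst (g s)) by (pose proof (Hnonneg s ltac:(lra)); lra).
    destruct (E_path_off_axis_visits_both_bars g m s ltac:(lra)
                (path_cont_sub g a b m s ltac:(lra) ltac:(lra) Hg)
                (fun t Ht => HE t ltac:(lra)) Hgm Hpos) as [t1 [t2 [Ht1 [Ht2 [Hy1 Hy2]]]]].
    pose proof (dist2_ge_snd (g t1) (g m)) as Hsnd1.
    pose proof (dist2_ge_snd (g t2) (g m)) as Hsnd2.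
    pose proof (Hclose t1 ltac:(lra) ltac:(rewrite Rabs_right; lra)).
    pose proof (Hclose t2 ltac:(lra) ltac:(rewrite Rabs_right; lra)).
    rewrite Hy1 in Hsnd1. rewrite Hy2 in Hsnd2.
    unfold Rabs in Hsnd1, Hsnd2; destruct Rcase_abs; destruct Rcase_abs; lra.
Qed.

Lemma E_not_arcwise_connected : ~ arcwise_connected2 E.
Proof.
  intro Harc.
  destruct (Harc (0, 0) (1, 0) (E_axis 0 ltac:(lra)) E_one_zero) as [g [[HE [Hg _]] [H0 H1]]].
  { intro Heq. injection Heq. lra. }
  assert (Hon : fst (g 1) = 0).
  { apply (E_path_stays_on_axis g 0 1); [lra|exact Hg|exact HE|rewrite H0; reflexivity|lra]. }
  rewrite H1 in Hon. simpl in Hon. lra.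
Qed.

Lemma open2_snd_band c r : open2 (fun q => Rabs (snd q - c) < r).
Proof.
  intros q Hq. exists (r - Rabs (snd q - c)). split; [lra|]. intros q' Hq'.
  pose proof (dist2_ge_snd q q') as Hsnd. rewrite Rabs_minus_sym in Hsnd.
  pose proof (Rabs_triang (snd q' - snd q) (snd q - c)) as Htri.
  replace (snd q' - snd q + (snd q - c)) with (snd q' - c) in Htri by ring. lra.
Qed.

(* Near [(0, 1/2)] the vertical line [x = 1/(2j - 1/2)] meets E only on a top bar, far from
   height [1/2]; so it disconnects every small neighbourhood of [(0, 1/2)] in E. *)
Lemma E_not_locally_connected : ~ locally_connected2 E.
Proof.
  intro Hlc.
  set (U := fun q : pt => Rabs (snd q - 1 / 2) < 1 / 4).
  assert (Up : U (0, 1 / 2)) by (unfold U; simpl; rewrite Rminus_diag, Rabs_R0; lra).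
  destruct (Hlc (0, 1 / 2) U (E_axis (1 / 2) ltac:(lra)) (open2_snd_band _ _) Up)
    as [V [HV [Vp [HVU Hconn]]]].
  destruct (HV _ Vp) as [e [He HVe]].
  destruct (exists_odd_INR_gt (1 / e)) as [j [Hj Hje]]. pose proof (INR_ge_1 j Hj).
  set (c := 1 / (2 * INR j - 1 / 2)).
  set (x0 := 1 / (2 * INR j - 1)).
  assert (Hx0c : c < x0).
  { unfold c, x0. apply lt_div1_swap; [apply div1_pos; lra|lra|]. rewrite div1_div1; lra. }
  assert (Hx0e : x0 < e) by (unfold x0; apply div1_lt_swap; lra).
  assert (Ex0 : E (x0, 1 / 2)).
  { unfold x0. rewrite <- INR_double_sub1 by exact Hj. apply E_vertical; [lia|lra]. }
  apply Hconn. exists (fun q => fst q < c), (fun q => c < fst q).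
  split; [apply open2_fst_lt|]. split; [apply open2_fst_gt|].
  split; [|split; [|split]].
  - intros q [Eq Vq]. destruct (Rtotal_order (fst q) c) as [|[Heq|]]; auto. exfalso.
    pose proof (HVU q Eq Vq) as Uq. unfold U in Uq.
    rewrite (E_snd_on_top_bar q j Hj Eq Heq) in Uq.
    rewrite Rabs_right in Uq; lra.
  - exists (0, 1 / 2). simpl. split; [split; [apply E_axis; lra|exact Vp]|].
    apply div1_pos. lra.
  - exists (x0, 1 / 2). simpl. split; [split; [exact Ex0|]|exact Hx0c].
    apply HVe. rewrite dist2_same_snd by reflexivity. simpl.
    rewrite Rminus_0_l, Rabs_Ropp, Rabs_right; [exact Hx0e|].
    left. apply div1_pos. lra.
  - intros q _ H1 H2. lra.
Qed.

(** * A continuous retraction of the comb *)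

Lemma exists_nat_floor t : 0 <= t -> exists k, INR k <= t < INR k + 1.
Proof.
  intro Ht. destruct (INR_unbounded t) as [n Hn]. revert Hn. induction n as [|n IH]; intro Hn.
  - simpl in Hn. lra.
  - destruct (Rlt_le_dec t (INR n)) as [Hlt|Hge]; [exact (IH Hlt)|].
    exists n. rewrite S_INR in Hn. lra.
Qed.

Definition nat_floor (t : R) : nat :=
  epsilon (inhabits 0%nat) (fun k => INR k <= t < INR k + 1).

Lemma nat_floor_spec t : 0 <= t -> INR (nat_floor t) <= t < INR (nat_floor t) + 1.
Proof. intro Ht. unfold nat_floor. apply epsilon_spec, exists_nat_floor, Ht. Qed.

Lemma nat_floor_unique k t : INR k <= t < INR k + 1 -> nat_floor t = k.
Proof.
  intro H. pose proof (nat_floor_spec t ltac:(pose proof (pos_INR k); lra)).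
  destruct (Nat.lt_trichotomy (nat_floor t) k) as [L|[L|L]]; [|exact L|]; exfalso;
    apply le_INR in L; rewrite S_INR in L; lra.
Qed.

Definition clamp01 (y : R) : R := Rmax 0 (Rmin 1 y).

Lemma clamp01_id y : 0 <= y <= 1 -> clamp01 y = y.
Proof. intro. unfold clamp01, Rmax, Rmin. repeat destruct Rle_dec; lra. Qed.

Lemma clamp01_range y : 0 <= clamp01 y <= 1.
Proof. unfold clamp01, Rmax, Rmin. repeat destruct Rle_dec; lra. Qed.

(* [(w, y) ↦ (cup_x w y, cup_y w y)] retracts the square [[-1/2, 1/2] × [0, 1]] onto its
   two vertical sides and its bottom side: points are pushed sideways, and lowered
   by [2 - 4|w|] so that the middle of the bottom side is reached first. *)
Definition cup_x (w y : R) : R := Rmax (-1/2) (Rmin (1/2) (w * (1 + y))).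
Definition cup_y (w y : R) : R := Rmax 0 (y - Rmin 1 (Rmax 0 (2 - 4 * Rabs w))).

Lemma cup_x_left y : 0 <= y <= 1 -> cup_x (-1/2) y = -1/2.
Proof. intro. unfold cup_x, Rmax, Rmin. repeat destruct Rle_dec; lra. Qed.

Lemma cup_x_right y : 0 <= y <= 1 -> cup_x (1/2) y = 1/2.
Proof. intro. unfold cup_x, Rmax, Rmin. repeat destruct Rle_dec; lra. Qed.

Lemma cup_y_side w y : Rabs w = 1/2 -> 0 <= y <= 1 -> cup_y w y = y.
Proof. intros Hw Hy. unfold cup_y. rewrite Hw. unfold Rmax, Rmin. repeat destruct Rle_dec; lra. Qed.

Lemma cup_x_bottom w : -1/2 <= w <= 1/2 -> cup_x w 0 = w.
Proof. intro. unfold cup_x, Rmax, Rmin. repeat destruct Rle_dec; lra. Qed.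

Lemma cup_y_bottom w : cup_y w 0 = 0.
Proof. unfold cup_y, Rmax, Rmin. repeat destruct Rle_dec; lra. Qed.

Lemma cup_range w y : 0 <= y <= 1 ->
  -1/2 <= cup_x w y <= 1/2 /\ 0 <= cup_y w y <= 1 /\
  (cup_y w y = 0 \/ cup_x w y = -1/2 \/ cup_x w y = 1/2).
Proof.
  intro Hy. split; [|split].
  - unfold cup_x, Rmax, Rmin. repeat destruct Rle_dec; lra.
  - unfold cup_y, Rmax, Rmin. pose proof (Rabs_pos w). repeat destruct Rle_dec; lra.
  - destruct (Req_dec (cup_y w y) 0) as [|Hne]; [left; assumption|right].
    assert (Hhigh : y > 2 - 4 * Rabs w).
    { unfold cup_y, Rmax, Rmin in Hne. repeat destruct Rle_dec; lra. }
    unfold cup_x, Rabs in *. destruct Rcase_abs.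
    + left. assert (w * (1 + y) <= - (1/2)) by nra. unfold Rmax, Rmin. repeat destruct Rle_dec; lra.
    + right. assert (w * (1 + y) >= 1/2) by nra. unfold Rmax, Rmin. repeat destruct Rle_dec; lra.
Qed.

(* On the strip [[k, k+1] × R], retract onto the part of the comb over [[k, k+1]]: the two
   vertical segments and the bottom bar ([k] even) or the top bar ([k] odd). *)
Definition cup_retract (k : nat) (t y : R) : pt :=
  let w := t - INR k - 1/2 in
  if Nat.even k then (INR k + 1/2 + cup_x w (clamp01 y), cup_y w (clamp01 y))
  else (INR k + 1/2 + cup_x w (1 - clamp01 y), 1 - cup_y w (1 - clamp01 y)).

Lemma cup_retract_left k y : cup_retract k (INR k) y = (INR k, clamp01 y).
Proof.
  pose proof (clamp01_range y). unfold cup_retract.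
  replace (INR k - INR k - 1/2) with (-1/2) by lra.
  assert (Rabs (-1/2) = 1/2) by (rewrite Rabs_left; lra).
  destruct (Nat.even k); rewrite cup_x_left, cup_y_side by (auto; lra); f_equal; lra.
Qed.

Lemma cup_retract_right k y : cup_retract k (INR k + 1) y = (INR k + 1, clamp01 y).
Proof.
  pose proof (clamp01_range y). unfold cup_retract.
  replace (INR k + 1 - INR k - 1/2) with (1/2) by lra.
  assert (Rabs (1/2) = 1/2) by (rewrite Rabs_right; lra).
  destruct (Nat.even k); rewrite cup_x_right, cup_y_side by (auto; lra); f_equal; lra.
Qed.

Lemma cup_retract_bar k t y : INR k <= t <= INR k + 1 ->
  y = (if Nat.even k then 0 else 1) -> cup_retract k t y = (t, y).
Proof.
  intros Ht Hy. unfold cup_retract. destruct (Nat.even k); subst y.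
  - rewrite clamp01_id, cup_x_bottom, cup_y_bottom by lra. f_equal. lra.
  - rewrite clamp01_id, Rminus_diag, cup_x_bottom, cup_y_bottom by lra. f_equal; lra.
Qed.

Lemma cup_retract_in_comb k t y : (1 <= k)%nat ->
  comb (fst (cup_retract k t y)) (snd (cup_retract k t y)).
Proof.
  intro Hk. pose proof (INR_ge_1 k Hk). pose proof (clamp01_range y) as Hy.
  unfold cup_retract. destruct (Nat.even k) eqn:Ev.
  - destruct (cup_range (t - INR k - 1/2) (clamp01 y) Hy) as [B1 [B2 B3]]. simpl.
    split; [lra|]. destruct B3 as [B|[B|B]].
    + right; right. apply Nat.even_spec in Ev. destruct Ev as [n ->].
      exists n. rewrite INR_double in *. split; [lia|lra].
    + left. exists k. split; [exact Hk|lra].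
    + left. exists (S k). split; [lia|]. rewrite S_INR. lra.
  - destruct (cup_range (t - INR k - 1/2) (1 - clamp01 y) ltac:(lra)) as [B1 [B2 B3]]. simpl.
    split; [lra|]. destruct B3 as [B|[B|B]].
    + right; left. destruct (Nat.Even_or_Odd k) as [He|[n ->]];
        [apply Nat.even_spec in He; congruence|].
      exists (S n). rewrite S_INR. rewrite INR_double_add1 in *. split; [lia|lra].
    + left. exists k. split; [exact Hk|lra].
    + left. exists (S k). split; [lia|]. rewrite S_INR. lra.
Qed.

Ltac rcont_auto :=
  repeat first [ apply rcont_fst | apply rcont_snd | apply rcont_const | apply rcont_abs
               | apply rcont_mult
               | apply (rcont_nonexpansive2 Rminus _ _ Rminus_nonexpansive2)
               | apply (rcont_nonexpansive2 Rplus _ _ Rplus_nonexpansive2)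
               | apply (rcont_nonexpansive2 Rmax _ _ Rmax_nonexpansive2)
               | apply (rcont_nonexpansive2 Rmin _ _ Rmin_nonexpansive2) ].

Lemma cup_retract_continuous k p : continuous_at2 (fun q => cup_retract k (fst q) (snd q)) p.
Proof.
  unfold cup_retract, cup_x, cup_y, clamp01.
  destruct (Nat.even k); apply continuous_at2_pair; rcont_auto.
Qed.

Definition comb_retract (q : pt) : pt := cup_retract (nat_floor (fst q)) (fst q) (snd q).

Lemma comb_retract_eq k q : INR k <= fst q <= INR k + 1 ->
  comb_retract q = cup_retract k (fst q) (snd q).
Proof.
  intro H. unfold comb_retract. destruct (Req_dec (fst q) (INR k + 1)) as [Hright|Hright].
  - rewrite Hright, <- S_INR, (nat_floor_unique (S k)) by lra.
    rewrite cup_retract_left, S_INR, cup_retract_right. reflexivity.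
  - rewrite (nat_floor_unique k) by lra. reflexivity.
Qed.

Lemma continuous_at2_glue F G1 G2 p r : r > 0 ->
  continuous_at2 G1 p -> continuous_at2 G2 p -> F p = G1 p -> F p = G2 p ->
  (forall q, dist2 p q < r -> F q = G1 q \/ F q = G2 q) -> continuous_at2 F p.
Proof.
  intros Hr H1 H2 E1 E2 Hglue eps He.
  destruct (H1 eps He) as [d1 [Hd1 C1]]. destruct (H2 eps He) as [d2 [Hd2 C2]].
  exists (Rmin r (Rmin d1 d2)). split; [repeat apply Rmin_pos; lra|]. intros q Hq.
  pose proof (Rmin_l r (Rmin d1 d2)); pose proof (Rmin_r r (Rmin d1 d2)).
  pose proof (Rmin_l d1 d2); pose proof (Rmin_r d1 d2).
  destruct (Hglue q ltac:(lra)) as [-> | ->].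
  - rewrite E1. apply C1. lra.
  - rewrite E2. apply C2. lra.
Qed.

(* The strip retractions agree on the common vertical lines, so they glue continuously. *)
Lemma comb_retract_continuous p : 1 <= fst p -> continuous_at2 comb_retract p.
Proof.
  intro Hp. pose proof (nat_floor_spec (fst p) ltac:(lra)) as Hk.
  set (k := nat_floor (fst p)) in *.
  assert (Hnear : forall q r, dist2 p q < r -> fst p - r < fst q < fst p + r).
  { intros q r Hq. pose proof (dist2_ge_fst p q). unfold Rabs in *; destruct Rcase_abs; lra. }
  destruct (Rlt_le_dec (INR k) (fst p)) as [Hint|Hbound].
  - apply (continuous_at2_glue _ _ _ p (Rmin (fst p - INR k) (INR k + 1 - fst p))
             ltac:(apply Rmin_pos; lra) (cup_retract_continuous k p) (cup_retract_continuous k p));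
      [apply comb_retract_eq; lra|apply comb_retract_eq; lra|].
    intros q Hq. left. apply comb_retract_eq.
    pose proof (Rmin_l (fst p - INR k) (INR k + 1 - fst p)).
    pose proof (Rmin_r (fst p - INR k) (INR k + 1 - fst p)).
    pose proof (Hnear q _ Hq). lra.
  - assert (Hk1 : (1 <= k)%nat) by (destruct k; [simpl in *; lra|lia]).
    assert (Hprev : INR (k - 1) = INR k - 1) by (rewrite minus_INR by lia; simpl; ring).
    apply (continuous_at2_glue _ _ _ p 1 ltac:(lra)
             (cup_retract_continuous k p) (cup_retract_continuous (k - 1) p));
      [apply comb_retract_eq; lra|apply comb_retract_eq; lra|].
    intros q Hq. pose proof (Hnear q _ Hq).
    destruct (Rle_lt_dec (fst p) (fst q)); [left|right]; apply comb_retract_eq; lra.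
Qed.

Lemma comb_retract_fixes t y : comb t y -> comb_retract (t, y) = (t, y).
Proof.
  intros [Hy [[n [Hn Hv]]|[[n [Hn [Hb Hy1]]]|[n [Hn [Hb Hy0]]]]]].
  - rewrite (comb_retract_eq n) by (cbn [fst]; lra). cbn [fst snd].
    rewrite Hv, cup_retract_left, clamp01_id by exact Hy. reflexivity.
  - assert (Hodd : INR (2 * (n - 1) + 1) = 2 * INR n - 1).
    { rewrite INR_double_add1, minus_INR by lia. simpl. ring. }
    rewrite (comb_retract_eq (2 * (n - 1) + 1)) by (cbn [fst]; lra). cbn [fst snd].
    apply cup_retract_bar; [lra|]. rewrite Nat.even_odd. exact Hy1.
  - rewrite (comb_retract_eq (2 * n)) by (cbn [fst]; rewrite INR_double; lra). cbn [fst snd].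
    apply cup_retract_bar; [rewrite INR_double; lra|]. rewrite Nat.even_even. exact Hy0.
Qed.

Lemma comb_retract_in_comb q : 1 <= fst q ->
  comb (fst (comb_retract q)) (snd (comb_retract q)).
Proof.
  intro Hq. apply cup_retract_in_comb. pose proof (nat_floor_spec (fst q) ltac:(lra)).
  destruct (nat_floor (fst q)); [simpl in *; lra|lia].
Qed.

(** * The B1-retraction *)

Definition E_retract_pos (p : pt) : pt := invx (comb_retract (invx p)).

Lemma invx_ge_1 p : 0 < fst p <= 1 -> 1 <= fst (invx p).
Proof.
  intro Hp. unfold invx; simpl. apply (le_div1_swap 1 (fst p)); [lra|lra|].
  rewrite Rdiv_1_r. lra.
Qed.

Lemma E_retract_pos_in_E p : 0 < fst p <= 1 -> E (E_retract_pos p).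
Proof.
  intro Hp. pose proof (comb_retract_in_comb (invx p) (invx_ge_1 p Hp)) as Hc.
  pose proof (comb_ge_1 _ _ Hc).
  unfold E_retract_pos, invx at 1. apply E_pos_comb; [apply div1_pos; lra|].
  rewrite div1_div1 by lra. exact Hc.
Qed.

Lemma E_retract_pos_fixes p : E p -> 0 < fst p -> E_retract_pos p = p.
Proof.
  intros HE Hx. destruct p as [x y]; simpl in Hx. apply E_pos_comb in HE; [|exact Hx].
  unfold E_retract_pos, invx at 2; simpl. rewrite comb_retract_fixes by exact HE.
  unfold invx; simpl. rewrite div1_div1 by lra. reflexivity.
Qed.

Lemma E_retract_pos_continuous p : 0 < fst p <= 1 -> continuous_at2 E_retract_pos p.
Proof.
  intro Hp. pose proof (invx_ge_1 p Hp) as Hinv.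
  pose proof (comb_ge_1 _ _ (comb_retract_in_comb (invx p) Hinv)).
  apply (continuous_at2_comp (fun q => comb_retract (invx q)) invx p).
  - apply continuous_at2_comp; [apply continuous_at2_invx; lra|].
    apply comb_retract_continuous. exact Hinv.
  - apply continuous_at2_invx. lra.
Qed.

Definition push_off_axis (N : nat) (p : pt) : pt := (Rmax (fst p) (1 / INR (S N)), snd p).

Definition E_retract_approx (N : nat) (p : pt) : pt := E_retract_pos (push_off_axis N p).

Definition E_retract (p : pt) : pt := if Rle_dec (fst p) 0 then p else E_retract_pos p.

Lemma div1_INR_S_range N : 0 < 1 / INR (S N) <= 1.
Proof.
  pose proof (INR_ge_1 (S N) ltac:(lia)). split; [apply div1_pos; lra|].
  pose proof (div1_INR_le 1 (S N) ltac:(lia)) as Hle. simpl INR at 2 in Hle. lra.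
Qed.

Lemma div1_INR_S_eventually_lt x : 0 < x -> exists N, forall n, (n >= N)%nat -> 1 / INR (S n) < x.
Proof.
  intro Hx. destruct (INR_unbounded (1 / x)) as [N HN]. exists N. intros n Hn.
  apply le_INR in Hn. rewrite S_INR. pose proof (pos_INR N).
  apply div1_lt_swap; lra.
Qed.

Lemma push_off_axis_range N p : square p -> 0 < fst (push_off_axis N p) <= 1.
Proof.
  intros [Hx _]. pose proof (div1_INR_S_range N). unfold push_off_axis; cbn [fst].
  unfold Rmax; destruct Rle_dec; lra.
Qed.

Lemma E_retract_approx_continuous N : continuous_on square E (E_retract_approx N).
Proof.
  split; [intros p Hp; apply E_retract_pos_in_E, push_off_axis_range, Hp|].
  intros p Hp eps He.
  assert (Hcont : continuous_at2 (E_retract_approx N) p).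
  { apply (continuous_at2_comp (push_off_axis N) E_retract_pos p).
    - unfold push_off_axis. apply continuous_at2_pair; rcont_auto.
    - apply E_retract_pos_continuous, push_off_axis_range, Hp. }
  destruct (Hcont eps He) as [d [Hd Hclose]].
  exists d. split; [exact Hd|]. intros q _. apply Hclose.
Qed.

Lemma E_retract_approx_cvg p : square p -> forall eps, eps > 0 ->
  exists N, forall n, (n >= N)%nat -> dist2 (E_retract_approx n p) (E_retract p) < eps.
Proof.
  intros [Hx Hy] eps He. unfold E_retract, E_retract_approx, push_off_axis.
  destruct Rle_dec as [Hx0|Hx0].
  - destruct (div1_INR_S_eventually_lt eps He) as [N HN]. exists N. intros n Hn.
    pose proof (div1_INR_S_range n). specialize (HN n Hn).
    replace (Rmax (fst p) (1 / INR (S n))) with (1 / INR (S n))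
      by (unfold Rmax; destruct Rle_dec; lra).
    rewrite E_retract_pos_fixes; [| apply E_vertical; [lia|exact Hy] | cbn [fst]; lra].
    rewrite dist2_same_snd by reflexivity. cbn [fst]. rewrite Rabs_right; lra.
  - destruct (div1_INR_S_eventually_lt (fst p) ltac:(lra)) as [N HN]. exists N. intros n Hn.
    specialize (HN n Hn).
    replace (Rmax (fst p) (1 / INR (S n))) with (fst p) by (unfold Rmax; destruct Rle_dec; lra).
    rewrite <- surjective_pairing, dist2_refl. exact He.
Qed.

Lemma E_retract_in_E p : square p -> E (E_retract p).
Proof.
  intros [Hx Hy]. unfold E_retract. destruct Rle_dec.
  - destruct p as [x y]; simpl in *. replace x with 0 by lra. apply E_axis, Hy.
  - apply E_retract_pos_in_E. lra.
Qed.

Lemma E_retract_fixes p : E p -> E_retract p = p.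
Proof.
  intro HE. unfold E_retract. destruct Rle_dec; [reflexivity|].
  apply E_retract_pos_fixes; [exact HE|lra].
Qed.

Lemma E_B1_retract : B1_retract square E.
Proof.
  exists E_retract. split; [|exact E_retract_fixes].
  split; [exact E_retract_in_E|].
  exists E_retract_approx. split; [exact E_retract_approx_continuous|exact E_retract_approx_cvg].
Qed.

Theorem mainTheorem8 :
  (forall p, E p -> square p) /\
  connected2 E /\ closed2 E /\
  ~ arcwise_connected2 E /\ ~ locally_connected2 E /\
  B1_retract square E.
Proof.
  exact (conj E_square (conj E_connected (conj E_closed
           (conj E_not_arcwise_connected (conj E_not_locally_connected E_B1_retract))))).
Qed.
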